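(* Let $n \leq 3$ be a positive integer. Every $n \times n$ nonnegative centrosymmetric matrix has only real eigenvalues. Moreover, real numbers $\lambda_1 \geq \cdots \geq \lambda_n$ are the eigenvalues of some $n \times n$ nonnegative centrosymmetric matrix if and only if $\lambda_1 \geq |\lambda_n|$ and $\sum_{j=1}^n \lambda_j \geq 0$.
   Context: $J$ is the $n \times n$ reverse identity matrix (ones on the anti-diagonal, zeros elsewhere). A matrix $Q$ is centrosymmetric if $JQJ = Q$ and nonnegative if all entries are nonnegative. *)

From HB Require Import structures.
From mathcomp Require Import all_boot all_order all_algebra.
From mathcomp Require Import reals.
From mathcomp Require Export complex.
Set Implicit Arguments. Unset Strict Implicit. Unset Printing Implicit Defensive.
Import Order.TTheory GRing.Theory Num.Theory.
Local Open Scope ring_scope.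

Definition revid (R : nzRingType) (n : nat) : 'M[R]_n :=
  \matrix_(i < n, j < n) (j == rev_ord i)%:R.

Definition centrosymmetric (R : nzRingType) (n : nat) (Q : 'M[R]_n) : Prop :=
  revid R n *m Q *m revid R n = Q.

Definition nonneg_mx (R : numDomainType) (m n : nat) (Q : 'M[R]_(m, n)) : Prop :=
  forall i j, 0 <= Q i j.

From HB Require Import structures.
From mathcomp Require Import all_boot all_order all_algebra.
From mathcomp Require Import reals ring lra zify.
From mathcomp Require Import complex.
Import Order.TTheory GRing.Theory Num.Theory.
Local Open Scope ring_scope.

(* For n <= 3 the characteristic polynomial of a centrosymmetric matrix
   factors explicitly: a 2x2 one [[a, b], [b, a]] has eigenvalues a + b and
   a - b, and a 3x3 one [[a, b, c], [d, e, d], [c, b, a]] has the eigenvalue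
   a - c together with the roots of X^2 - (a + c + e) X + (a + c) e - 2 b d,
   whose discriminant (a + c - e)^2 + 8 b d is nonnegative.  Hence for
   nonnegative entries the spectrum is real and its largest element dominates
   every eigenvalue in modulus; this gives lam_1 >= |lam_n|, while the sum of
   the eigenvalues is the (nonnegative) trace.  Conversely, every admissible
   list is the spectrum of an explicit nonnegative matrix of that shape. *)

Lemma revid_mulmxE (R : nzRingType) n (Q : 'M[R]_n) i j :
  (revid R n *m Q *m revid R n) i j = Q (rev_ord i) (rev_ord j).
Proof.
have revidE (k l : 'I_n) : revid R n k l = (k == rev_ord l)%:R.
  have rev_ord_eq : (l == rev_ord k) = (k == rev_ord l).
    by apply/eqP/eqP => [->|->]; rewrite rev_ordK.
  by rewrite mxE rev_ord_eq.
rewrite mxE (bigD1 (rev_ord j)) //= big1 => [|k /negbTE nkj]; last first.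
  by rewrite revidE nkj mulr0.
rewrite revidE eqxx mulr1 addr0 mxE (bigD1 (rev_ord i)) //= big1 => [|k /negbTE nki].
  by rewrite mxE eqxx mul1r addr0.
by rewrite mxE nki mul0r.
Qed.

Lemma centrosymmetricP (R : nzRingType) n (Q : 'M[R]_n) :
  centrosymmetric Q <-> forall i j, Q (rev_ord i) (rev_ord j) = Q i j.
Proof.
split => [cQ i j|cQ]; first by rewrite -revid_mulmxE cQ.
by apply/matrixP => i j; rewrite revid_mulmxE cQ.
Qed.

Lemma centrosymmetric_entry {R : nzRingType} {n} {Q : 'M[R]_n} (i j i' j' : 'I_n) :
  centrosymmetric Q -> (i + i')%N = n.-1 -> (j + j')%N = n.-1 -> Q i' j' = Q i j.
Proof.
move/centrosymmetricP => cQ ii' jj'.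
have rev_ordE (k k' : 'I_n) : (k + k')%N = n.-1 -> k' = rev_ord k.
  by move=> kk'; apply: val_inj => /=; have := ltn_ord k; lia.
by rewrite (rev_ordE i i') // (rev_ordE j j') // cQ.
Qed.

Section SmallDeterminants.

Context {R : comNzRingType}.

(* Reading the entries through the values of their indices lets [ring]
   identify [M (lift 0 0) _] with [M 1 _], whose ordinal proofs differ. *)
Let entry_by_val {n} (M : 'M[R]_n.+1) :
  {e : nat -> nat -> R | forall i j, M i j = e i j}.
Proof. by exists (fun k l => M (inord k) (inord l)) => i j; rewrite !inord_val. Qed.

Lemma det_mx22 (M : 'M[R]_2) : \det M = M 0 0 * M 1 1 - M 0 1 * M 1 0.
Proof.
rewrite (expand_det_row _ 0) !big_ord_recl big_ord0 /cofactor !det_mx11 !mxE.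
by have [e Me] := entry_by_val M; rewrite !Me; ring.
Qed.

Lemma det_mx33 (M : 'M[R]_3) :
  \det M = M 0 0 * (M 1 1 * M 2 2 - M 1 2 * M 2 1)
         - M 0 1 * (M 1 0 * M 2 2 - M 1 2 * M 2 0)
         + M 0 2 * (M 1 0 * M 2 1 - M 1 1 * M 2 0).
Proof.
rewrite (expand_det_row _ 0) !big_ord_recl big_ord0 /cofactor !det_mx22 !mxE.
by have [e Me] := entry_by_val M; rewrite !Me; ring.
Qed.

End SmallDeterminants.

Section CentrosymmetricCharPoly.

Context {R : comNzRingType}.

Lemma char_poly_mx11 (M : 'M[R]_1) : char_poly M = 'X - (M 0 0)%:P.
Proof. by rewrite /char_poly det_mx11 !mxE mulr1n. Qed.

Lemma char_poly_centro2 (M : 'M[R]_2) : centrosymmetric M ->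
  char_poly M = ('X - (M 0 0 + M 0 1)%:P) * ('X - (M 0 0 - M 0 1)%:P).
Proof.
move=> cM; rewrite /char_poly det_mx22 !mxE /= mulr1n !mulr0n.
rewrite (centrosymmetric_entry 0 0 1 1 cM) // (centrosymmetric_entry 0 1 1 0 cM) //.
by rewrite !(polyCB, polyCD); ring.
Qed.

Lemma char_poly_centro3 (M : 'M[R]_3) : centrosymmetric M ->
  char_poly M = ('X - (M 0 0 - M 0 2)%:P) *
    ('X * 'X - (M 0 0 + M 0 2 + M 1 1)%:P * 'X
      + ((M 0 0 + M 0 2) * M 1 1 - 2 * M 0 1 * M 1 0)%:P).
Proof.
move=> cM; rewrite /char_poly det_mx33 !mxE /= !mulr1n !mulr0n.
rewrite (centrosymmetric_entry 0 0 2 2 cM) // (centrosymmetric_entry 0 1 2 1 cM) //.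
rewrite (centrosymmetric_entry 0 2 2 0 cM) // (centrosymmetric_entry 1 0 1 2 cM) //.
by rewrite !(polyCB, polyCD, polyCM); ring.
Qed.

End CentrosymmetricCharPoly.

Lemma mxtrace_char_poly_roots {R : comNzRingType} {n} {A : 'M[R]_n.+1} {r : seq R} :
  char_poly A = \prod_(x <- r) ('X - x%:P) -> \tr A = \sum_(x <- r) x.
Proof.
move=> cpA; have size_r : size r = n.+1.
  by have := size_char_poly A; rewrite cpA size_prod_XsubC => -[].
apply: oppr_inj; rewrite -char_poly_trace // cpA -coefPn_prod_XsubC size_r //.
Qed.

Lemma mxtrace_ge0 {R : numDomainType} {n} {A : 'M[R]_n} : nonneg_mx A -> 0 <= \tr A.
Proof. by move=> A_ge0; apply: sumr_ge0 => i _; apply: A_ge0. Qed.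

Lemma prod_XsubC_eq_mem {R : idomainType} {r s : seq R} :
  \prod_(x <- r) ('X - x%:P) = \prod_(x <- s) ('X - x%:P) -> r =i s.
Proof. by move=> eq_rs x; rewrite -!root_prod_XsubC eq_rs. Qed.

Lemma eigenvalue_map_complex_real {R : rcfType} {n} {A : 'M[R]_n} {r : seq R} :
  char_poly A = \prod_(x <- r) ('X - x%:P) ->
  forall z : complex R, eigenvalue (map_mx (fun x : R => (x%:C)%C) A) z ->
    z \is Num.real.
Proof.
move=> cpA z; rewrite eigenvalue_root_char -map_char_poly cpA map_prod_XsubC.
rewrite -(big_map _ xpredT (fun a => 'X - a%:P)) root_prod_XsubC.
by case/mapP => x _ ->; apply/complex_realP; exists x.
Qed.

Definition real_perron_spectrum {R : numDomainType} {n} (A : 'M[R]_n) : Prop :=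
  exists2 r : seq R, char_poly A = \prod_(x <- r) ('X - x%:P)
    & exists2 p, p \in r & {in r, forall x, `|x| <= p}.

Definition centro_realizable {R : numDomainType} {n} (lam : 'I_n -> R) : Prop :=
  exists A : 'M[R]_n, nonneg_mx A /\ centrosymmetric A /\
    char_poly A = \prod_(i < n) ('X - (lam i)%:P).

Lemma dominant_value_bound {R : realDomainType} {n} {lam : 'I_n.+1 -> R} p :
  (forall i j : 'I_n.+1, (i <= j)%N -> lam j <= lam i) ->
  p \in codom lam -> {in codom lam, forall x, `|x| <= p} ->
  `|lam ord_max| <= lam ord0.
Proof.
move=> lam_nonincr /codomP [i ->] dom_i.
exact: le_trans (dom_i _ (codom_f lam ord_max)) (lam_nonincr ord0 i (leq0n i)).
Qed.

Lemma nonneg_centro_spectra (R : rcfType) n :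
  (forall A : 'M[R]_n.+1, nonneg_mx A -> centrosymmetric A -> real_perron_spectrum A) ->
  (forall lam : 'I_n.+1 -> R, (forall i j : 'I_n.+1, (i <= j)%N -> lam j <= lam i) ->
     `|lam ord_max| <= lam ord0 -> 0 <= \sum_(i < n.+1) lam i -> centro_realizable lam) ->
  (forall A : 'M[R]_n.+1, nonneg_mx A -> centrosymmetric A ->
     forall z : complex R,
       eigenvalue (map_mx (fun x : R => (x%:C)%C) A) z -> z \is Num.real)
  /\
  (forall lam : 'I_n.+1 -> R,
     (forall i j : 'I_n.+1, (i <= j)%N -> lam j <= lam i) ->
     (centro_realizable lam <->
      (`|lam ord_max| <= lam ord0 /\ 0 <= \sum_(i < n.+1) lam i))).
Proof.
move=> perron realize; split=> [A A_ge0 cA|lam lam_nonincr].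
  by have [r cpA _] := perron A A_ge0 cA; apply: eigenvalue_map_complex_real cpA.
split=> [[A [A_ge0 [cA cpA]]]|[]]; last exact: realize.
have cp_codom : char_poly A = \prod_(x <- codom lam) ('X - x%:P).
  by rewrite big_image.
have [r cpr [p p_r dom_p]] := perron A A_ge0 cA.
have r_lam : r =i codom lam by apply: prod_XsubC_eq_mem; rewrite -cpr.
split.
  by apply: (dominant_value_bound p lam_nonincr) => [|x]; rewrite -r_lam // => /dom_p.
have -> : \sum_(i < n.+1) lam i = \sum_(x <- codom lam) x by rewrite big_image.
by rewrite -(mxtrace_char_poly_roots cp_codom) mxtrace_ge0.
Qed.

Lemma big_ord2 (T : Type) (idx : T) (op : Monoid.law idx) (F : 'I_2 -> T) :
  \big[op/idx]_(i < 2) F i = op (F 0) (F 1).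
Proof.
rewrite !big_ord_recl big_ord0 Monoid.mulm1.
by congr (op (F _) (F _)); apply: val_inj.
Qed.

Lemma big_ord3 (T : Type) (idx : T) (op : Monoid.law idx) (F : 'I_3 -> T) :
  \big[op/idx]_(i < 3) F i = op (F 0) (op (F 1) (F 2)).
Proof.
rewrite !big_ord_recl big_ord0 Monoid.mulm1.
by congr (op (F _) (op (F _) (F _))); apply: val_inj.
Qed.

Lemma monic_quadratic_split (R : rcfType) (T P : R) : 4 * P <= T ^+ 2 ->
  let s := Num.sqrt (T ^+ 2 - 4 * P) in
  'X * 'X - T%:P * 'X + P%:P = ('X - ((T + s) / 2)%:P) * ('X - ((T - s) / 2)%:P).
Proof.
move=> disc_ge0 s; have s2 : s ^+ 2 = T ^+ 2 - 4 * P by rewrite sqr_sqrtr ?subr_ge0.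
set x := (T + s) / 2; set y := (T - s) / 2.
have sum_xy : x + y = T by rewrite /x /y; field.
have prod_xy : x * y = P.
  have -> : x * y = (T ^+ 2 - s ^+ 2) / 4 by rewrite /x /y; field.
  by rewrite s2; field.
by rewrite -sum_xy -prod_xy !(polyCD, polyCM); ring.
Qed.

Section SmallSpectra.

Context {R : rcfType}.

Lemma mx11_real_perron_spectrum (A : 'M[R]_1) :
  nonneg_mx A -> real_perron_spectrum A.
Proof.
move=> A_ge0; exists [:: A 0 0]; first by rewrite char_poly_mx11 big_seq1.
exists (A 0 0) => [|x]; first exact: mem_head.
by rewrite inE => /eqP ->; rewrite ger0_norm.
Qed.

Lemma centro2_real_perron_spectrum (A : 'M[R]_2) :
  nonneg_mx A -> centrosymmetric A -> real_perron_spectrum A.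
Proof.
move=> A_ge0 cA; have a_ge0 := A_ge0 0 0; have b_ge0 := A_ge0 0 1.
exists [:: A 0 0 + A 0 1; A 0 0 - A 0 1].
  by rewrite char_poly_centro2 // !big_cons big_nil mulr1.
exists (A 0 0 + A 0 1) => [|x]; first exact: mem_head.
by rewrite !inE => /orP [] /eqP ->; rewrite ler_norml; apply/andP; split; lra.
Qed.

Lemma centro3_real_perron_spectrum (A : 'M[R]_3) :
  nonneg_mx A -> centrosymmetric A -> real_perron_spectrum A.
Proof.
move=> A_ge0 cA; rewrite /real_perron_spectrum char_poly_centro3 //.
move: (A_ge0 0 0) (A_ge0 0 1) (A_ge0 0 2) (A_ge0 1 0) (A_ge0 1 1).
move: (A 0 0) (A 0 1) (A 0 2) (A 1 0) (A 1 1) => a b c d e a_ge0 b_ge0 c_ge0 d_ge0 e_ge0.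
have disc : (a + c + e) ^+ 2 - 4 * ((a + c) * e - 2 * b * d)
            = (a + c - e) ^+ 2 + 8 * (b * d) by ring.
have bd_ge0 : 0 <= 8 * (b * d) by rewrite !mulr_ge0.
rewrite monic_quadratic_split; last by rewrite -subr_ge0 disc addr_ge0 ?sqr_ge0.
rewrite disc; set s := Num.sqrt _.
have s_ge0 : 0 <= s by apply: sqrtr_ge0.
have : `|a + c - e| <= s by rewrite -sqrtr_sqr ler_wsqrtr // lerDl.
rewrite ler_norml => /andP [s_lb s_ub].
exists [:: a - c; (a + c + e + s) / 2; (a + c + e - s) / 2].
  by rewrite !big_cons big_nil mulr1.
exists ((a + c + e + s) / 2) => [|x]; first by rewrite !inE eqxx orbT.
by rewrite !inE => /or3P [] /eqP ->; rewrite ler_norml; apply/andP; split; lra.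
Qed.

End SmallSpectra.

Definition centro_mx2 {R : nzRingType} (a b : R) : 'M[R]_2 :=
  \matrix_(i, j) if i == j then a else b.

(* The matrix [[a, b, c], [d, e, d], [c, b, a]]. *)
Definition centro_mx3 {R : nzRingType} (a b c d e : R) : 'M[R]_3 :=
  \matrix_(i, j) if i == 1 then (if j == 1 then e else d)
                 else if j == 1 then b else if i == j then a else c.

Lemma centro_mx2_centrosymmetric (R : nzRingType) (a b : R) :
  centrosymmetric (centro_mx2 a b).
Proof. by apply/centrosymmetricP => i j; rewrite !mxE (inj_eq rev_ord_inj). Qed.

Lemma centro_mx3_centrosymmetric (R : nzRingType) (a b c d e : R) :
  centrosymmetric (centro_mx3 a b c d e).
Proof.
apply/centrosymmetricP => i j.
have rev_ord_eq1 (k : 'I_3) : (rev_ord k == 1) = (k == 1).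
  by rewrite -[X in rev_ord k == X](@rev_ordK _ 1) (inj_eq rev_ord_inj).
by rewrite !mxE !rev_ord_eq1 (inj_eq rev_ord_inj).
Qed.

Lemma centro_mx3_nonneg (R : numDomainType) (a b c d e : R) :
  0 <= a -> 0 <= b -> 0 <= c -> 0 <= d -> 0 <= e -> nonneg_mx (centro_mx3 a b c d e).
Proof.
by move=> *; move=> i j; rewrite mxE; case: (i == 1); case: (j == 1); case: (i == j).
Qed.

Lemma char_poly_centro_mx3 (R : comNzRingType) (a b c d e : R) :
  char_poly (centro_mx3 a b c d e) = ('X - (a - c)%:P) *
    ('X * 'X - (a + c + e)%:P * 'X + ((a + c) * e - 2 * b * d)%:P).
Proof.
rewrite char_poly_centro3; last exact: centro_mx3_centrosymmetric.
by rewrite !mxE.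
Qed.

Section Realizations.

Context {R : realFieldType}.

Lemma centro_realizable1 (lam : 'I_1 -> R) : 0 <= lam 0 -> centro_realizable lam.
Proof.
move=> lam0_ge0; exists (const_mx (lam 0)).
split; first by move=> i j; rewrite mxE.
split; first by apply/centrosymmetricP => i j; rewrite !mxE.
by rewrite char_poly_mx11 big_ord1 mxE.
Qed.

Lemma centro_realizable2 (lam : 'I_2 -> R) :
  `|lam 1| <= lam 0 -> centro_realizable lam.
Proof.
rewrite ler_norml => /andP [l1_lb l1_ub].
exists (centro_mx2 ((lam 0 + lam 1) / 2) ((lam 0 - lam 1) / 2)).
split; first by move=> i j; rewrite mxE; case: (i == j); lra.
split; first exact: centro_mx2_centrosymmetric.
rewrite char_poly_centro2; last exact: centro_mx2_centrosymmetric.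
by rewrite big_ord2 !mxE /=; congr (('X - _%:P) * ('X - _%:P)); field.
Qed.

Lemma centro_realizable3 (lam : 'I_3 -> R) :
  lam 2 <= lam 1 -> `|lam 2| <= lam 0 -> 0 <= lam 0 + (lam 1 + lam 2) ->
  centro_realizable lam.
Proof.
move=> l21; rewrite ler_norml => /andP [l2_lb l2_ub] sum_ge0.
have char_poly_lam a b c d e : a - c = lam 2 -> a + c + e = lam 0 + lam 1 ->
    (a + c) * e - 2 * b * d = lam 0 * lam 1 ->
    char_poly (centro_mx3 a b c d e) = \prod_(i < 3) ('X - (lam i)%:P).
  move=> ac_lam2 sum_lam01 prod_lam01.
  by rewrite char_poly_centro_mx3 ac_lam2 sum_lam01 prod_lam01 big_ord3 /=
    !(polyCD, polyCM); ring.
have [l1_ge0|l1_lt0] := lerP 0 (lam 1).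
(* Up to a permutation, [lam 1] on the centre plus [[a, c], [c, a]] with
   a + c = lam 0 and a - c = lam 2. *)
  exists (centro_mx3 ((lam 0 + lam 2) / 2) 0 ((lam 0 - lam 2) / 2) 0 (lam 1)).
  split; first by apply: centro_mx3_nonneg; lra.
  split; first exact: centro_mx3_centrosymmetric.
  by apply: char_poly_lam; field.
(* The quadratic factor needs (a + c) e - 2 b d = lam 0 lam 1 < 0; take e = 0. *)
have l01_ge0 : 0 <= lam 0 * - lam 1 by apply: mulr_ge0; lra.
exists (centro_mx3 ((lam 0 + lam 1 + lam 2) / 2) 1 ((lam 0 + lam 1 - lam 2) / 2)
          (lam 0 * - lam 1 / 2) 0).
split; first by apply: centro_mx3_nonneg; lra.
split; first exact: centro_mx3_centrosymmetric.
by apply: char_poly_lam; field.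
Qed.

End Realizations.

Theorem theorem3p1 (R : realType) (n : nat) (hn : (n < 3)%N) :
  (forall A : 'M[R]_n.+1, nonneg_mx A -> centrosymmetric A ->
     forall z : complex R,
       eigenvalue (map_mx (fun x : R => (x%:C)%C) A) z -> z \is Num.real)
  /\
  (forall lam : 'I_n.+1 -> R,
     (forall i j : 'I_n.+1, (i <= j)%N -> lam j <= lam i) ->
     ((exists A : 'M[R]_n.+1, nonneg_mx A /\ centrosymmetric A /\
         char_poly A = \prod_(i < n.+1) ('X - (lam i)%:P))
      <->
      (`|lam ord_max| <= lam ord0 /\ 0 <= \sum_(i < n.+1) lam i))).
Proof.
case: n hn => [|[|[|//]]] _; apply: nonneg_centro_spectra.
- by move=> A A_ge0 _; apply: mx11_real_perron_spectrum.
- by move=> lam _ _; rewrite big_ord1; apply: centro_realizable1.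
- exact: centro2_real_perron_spectrum.
- move=> lam _; rewrite (_ : ord_max = 1); last exact: val_inj.
  by move=> lam_dom _; apply: centro_realizable2.
- exact: centro3_real_perron_spectrum.
- move=> lam lam_nonincr; rewrite big_ord3 (_ : ord_max = 2); last exact: val_inj.
  by apply: centro_realizable3 (lam_nonincr 1 2 isT).
Qed.
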